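(* For $n\ge1$ let $\mathcal{R}_n:=\mathbb{K}\langle x_1,\dots,x_n\rangle$ (noncommutative polynomials) with compositions $$(P\bullet_iQ)(x_1,\dots,x_{n+m-1}):=P(x_1,\dots,x_{i-1},x_i+\cdots+x_{i+m-1},x_{i+m},\dots,x_{n+m-1})\,Q(x_i,\dots,x_{i+m-1})$$ for $P\in\mathcal{R}_n$, $Q\in\mathcal{R}_m$, $1\le i\le n$. Then $\mathcal{R}$ is a pre-shuffle algebra isomorphic to $PerAsDer$, via $\mathrm{id}\mapsto1\in\mathbb{K}\langle x_1\rangle$, $D\mapsto x_1$, $\mu\mapsto1\in\mathbb{K}\langle x_1,x_2\rangle$. Under this isomorphism the operation $\big(\cdots((\mu_n\bullet_{j_k}D)\bullet_{j_{k-1}}D)\cdots\big)\bullet_{j_1}D$ corresponds to the noncommutative monomial $x_{j_k}x_{j_{k-1}}\cdots x_{j_1}$; in particular $PerAsDer_n\cong\mathbb{K}\langle x_1,\dots,x_n\rangle$.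
   Context: A pre-shuffle algebra (Ronco) is a family of vector spaces $(\mathcal{P}_n)_{n\ge1}$ with linear maps $\bullet_i:\mathcal{P}_m\otimes\mathcal{P}_n\to\mathcal{P}_{m+n-1}$, $1\le i\le m$, satisfying $(\lambda\bullet_i\mu)\bullet_{i-1+j}\nu=\lambda\bullet_i(\mu\bullet_j\nu)$ for $\lambda\in\mathcal{P}_l$, $\mu\in\mathcal{P}_m$, $1\le i\le l$, $1\le j\le m$ (no parallel-composition axiom), together with a unit $\mathrm{id}\in\mathcal{P}_1$. $PerAsDer$ is the pre-shuffle algebra generated by a unary operation $D$ and a binary operation $\mu$ subject to the relations $\mu\bullet_1\mu=\mu\bullet_2\mu$, $D\bullet_1\mu=\mu\bullet_1D+\mu\bullet_2D$, $(\alpha\bullet_iD)\bullet_j\mu=(\alpha\bullet_j\mu)\bullet_iD$ and $(\alpha\bullet_i\mu)\bullet_{j+1}D=(\alpha\bullet_jD)\bullet_i\mu$ for every operation $\alpha$ and all $i<j$. $\mu_n$ denotes the composite of $n-1$ copies of $\mu$ (well defined by associativity), $\mu_1=\mathrm{id}$. *)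

From HB Require Import structures.
From mathcomp Require Import all_boot all_order all_algebra.
From Stdlib Require Import ClassicalEpsilon FunctionalExtensionality.

Set Implicit Arguments.
Unset Strict Implicit.
Unset Printing Implicit Defensive.

Import Order.TTheory GRing.Theory Num.Theory.
Local Open Scope ring_scope.

Definition asbool (P : Prop) : bool :=
  if excluded_middle_informative P then true else false.

Lemma asboolP (P : Prop) : reflect P (asbool P).
Proof. by rewrite /asbool; case: excluded_middle_informative => h; constructor. Qed.

(* Coefficient functions on noncommutative words.  A word is a         *)
(* [seq nat]; the letter [j : nat] stands for the variable x_(j+1).    *)
Definition ncfun (K : fieldType) := seq nat -> K.

Section NCFun.
Variable K : fieldType.

Definition ncfun_eq (f g : ncfun K) : bool := asbool (f = g).
Lemma ncfun_eqP : Equality.axiom ncfun_eq.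
Proof. by move=> f g; apply: asboolP. Qed.
HB.instance Definition _ := hasDecEq.Build (ncfun K) ncfun_eqP.

Definition ncfun_find (P : pred (ncfun K)) (n : nat) : option (ncfun K) :=
  match excluded_middle_informative (exists x, P x) with
  | left h => Some (proj1_sig (constructive_indefinite_description _ h))
  | right _ => None
  end.

Lemma ncfun_find_correct P n x : ncfun_find P n = Some x -> P x.
Proof.
rewrite /ncfun_find; case: excluded_middle_informative => // h [<-].
exact: proj2_sig (constructive_indefinite_description _ h).
Qed.

Lemma ncfun_find_complete (P : pred (ncfun K)) :
  (exists x, P x) -> exists n, ncfun_find P n.
Proof.
move=> ex; exists 0%N; rewrite /ncfun_find.
by case: excluded_middle_informative.
Qed.

Lemma ncfun_find_ext (P Q : pred (ncfun K)) :
  P =1 Q -> ncfun_find P =1 ncfun_find Q.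
Proof. by move=> /functional_extensionality ->. Qed.

HB.instance Definition _ := hasChoice.Build (ncfun K)
  ncfun_find_correct ncfun_find_complete ncfun_find_ext.

Definition ncfun_zero : ncfun K := fun _ => 0.
Definition ncfun_opp (f : ncfun K) : ncfun K := fun w => - f w.
Definition ncfun_add (f g : ncfun K) : ncfun K := fun w => f w + g w.
Definition ncfun_scale (a : K) (f : ncfun K) : ncfun K := fun w => a * f w.

Lemma ncfun_addA : associative ncfun_add.
Proof. by move=> f g h; apply: functional_extensionality => w; rewrite /ncfun_add addrA. Qed.
Lemma ncfun_addC : commutative ncfun_add.
Proof. by move=> f g; apply: functional_extensionality => w; rewrite /ncfun_add addrC. Qed.
Lemma ncfun_add0 : left_id ncfun_zero ncfun_add.
Proof. by move=> f; apply: functional_extensionality => w; rewrite /ncfun_add add0r. Qed.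
Lemma ncfun_addN : left_inverse ncfun_zero ncfun_opp ncfun_add.
Proof. by move=> f; apply: functional_extensionality => w; rewrite /ncfun_add /ncfun_opp addNr. Qed.

HB.instance Definition _ := GRing.isZmodule.Build (ncfun K)
  ncfun_addA ncfun_addC ncfun_add0 ncfun_addN.

Lemma ncfun_scaleA a b (v : ncfun K) :
  ncfun_scale a (ncfun_scale b v) = ncfun_scale (a * b) v.
Proof. by apply: functional_extensionality => w; rewrite /ncfun_scale mulrA. Qed.
Lemma ncfun_scale1 : left_id 1 ncfun_scale.
Proof. by move=> f; apply: functional_extensionality => w; rewrite /ncfun_scale mul1r. Qed.
Lemma ncfun_scaleDr : right_distributive ncfun_scale +%R.
Proof. by move=> a f g; apply: functional_extensionality => w; rewrite /ncfun_scale mulrDr. Qed.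
Lemma ncfun_scaleDl (v : ncfun K) : {morph ncfun_scale^~ v : a b / a + b}.
Proof. by move=> a b; apply: functional_extensionality => w; rewrite /ncfun_scale mulrDl. Qed.

HB.instance Definition _ := GRing.Zmodule_isLmodule.Build K (ncfun K)
  ncfun_scaleA ncfun_scale1 ncfun_scaleDr ncfun_scaleDl.

Definition is_ncpoly (n : nat) (f : ncfun K) : Prop :=
  exists N : nat, forall w, f w != 0 -> (size w <= N)%N && all (fun j => j < n)%N w.

Definition ncpoly_pred (n : nat) : pred (ncfun K) := fun f => asbool (is_ncpoly n f).

Lemma ncpoly_closed n : subsemimod_closed (ncpoly_pred n).
Proof.
split; first split.
- by apply/asboolP; exists 0%N => w; rewrite eqxx.
- move=> f g /asboolP [N1 H1] /asboolP [N2 H2]; apply/asboolP; exists (maxn N1 N2) => w.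
  have [f0|/H1/andP[s a]] := eqVneq (f w) 0.
    have [g0|/H2/andP[s a]] := eqVneq (g w) 0.
      by rewrite /GRing.add /= /ncfun_add f0 g0 addr0 eqxx.
    by rewrite a leq_max s orbT.
  by rewrite a leq_max s.
- move=> a f /asboolP [N H]; apply/asboolP; exists N => w.
  rewrite /GRing.scale /= /ncfun_scale mulf_eq0 negb_or => /andP[_ /H] //.
Qed.

Definition ncpoly (n : nat) := {f : ncfun K | ncpoly_pred n f}.
HB.instance Definition _ n :=
  GRing.isSubmodClosed.Build K (ncfun K) (ncpoly_pred n) (ncpoly_closed n).
HB.instance Definition _ n := [isSub of ncpoly n for @sval (ncfun K) (fun f => ncpoly_pred n f)].
HB.instance Definition _ n := [Choice of ncpoly n by <:].
HB.instance Definition _ n := [SubChoice_isSubLmodule of ncpoly n by <:].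

End NCFun.

(* [ps_car P n] is the K-vector space P_n (only n >= 1 is meaningful;  *)
(* the space at n = 0 is never constrained), [ps_comp P i x y] is       *)
Record preShuffle (K : fieldType) := PreShuffle {
  ps_car : nat -> lmodType K;
  ps_comp : forall m n : nat, nat -> ps_car m -> ps_car n -> ps_car (m + n).-1;
  ps_id : ps_car 1
}.
Arguments ps_car {K} _ _.
Arguments ps_comp {K} _ {m n} _ _ _.
Arguments ps_id {K} _.

Definition ps_tr (K : fieldType) (P : preShuffle K) (a b : nat) (e : a = b)
  (x : ps_car P a) : ps_car P b := eq_rect a (fun k => ps_car P k) x b e.
Arguments ps_tr {K} P {a b} e x.

Definition is_preShuffle (K : fieldType) (P : preShuffle K) : Prop :=
  [/\ (forall (m n i : nat), (0 < n)%N -> (1 <= i <= m)%N ->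
         forall (a : K) (x1 x2 : ps_car P m) (y : ps_car P n),
           ps_comp P i (a *: x1 + x2) y = a *: ps_comp P i x1 y + ps_comp P i x2 y),
      (forall (m n i : nat), (0 < n)%N -> (1 <= i <= m)%N ->
         forall (a : K) (x : ps_car P m) (y1 y2 : ps_car P n),
           ps_comp P i x (a *: y1 + y2) = a *: ps_comp P i x y1 + ps_comp P i x y2),
      (forall (l m n i j : nat), (0 < n)%N -> (1 <= i <= l)%N -> (1 <= j <= m)%N ->
         forall (x : ps_car P l) (y : ps_car P m) (z : ps_car P n)
                (e : (l + (m + n).-1).-1 = ((l + m).-1 + n).-1),
           ps_comp P (i.-1 + j) (ps_comp P i x y) z
           = ps_tr P e (ps_comp P i x (ps_comp P j y z))),
      (forall (n : nat) (x : ps_car P n.+1), ps_comp P 1 (ps_id P) x = x)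
    & (forall (n i : nat) (x : ps_car P n), (1 <= i <= n)%N ->
         forall e : (n + 1).-1 = n, ps_tr P e (ps_comp P i x (ps_id P)) = x)].

Definition is_psmorph (K : fieldType) (P Q : preShuffle K)
  (f : forall n, ps_car P n -> ps_car Q n) : Prop :=
  [/\ (forall n (a : K) (x y : ps_car P n), f n (a *: x + y) = a *: f n x + f n y),
      (forall (m n i : nat), (0 < n)%N -> (1 <= i <= m)%N ->
         forall (x : ps_car P m) (y : ps_car P n),
           f _ (ps_comp P i x y) = ps_comp Q i (f m x) (f n y))
    & f 1%N (ps_id P) = ps_id Q].

Definition PerAsDer_rel (K : fieldType) (P : preShuffle K)
  (d : ps_car P 1) (mu : ps_car P 2) : Prop :=
  [/\ ps_comp P 1 mu mu = ps_comp P 2 mu mu,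
      ps_comp P 1 d mu = ps_comp P 1 mu d + ps_comp P 2 mu d,
      (forall (k : nat) (a : ps_car P k) (i j : nat), (1 <= i)%N -> (i < j)%N -> (j <= k)%N ->
         forall e : (((k + 2).-1 + 1).-1 = ((k + 1).-1 + 2).-1),
           ps_comp P j (ps_comp P i a d) mu = ps_tr P e (ps_comp P i (ps_comp P j a mu) d))
    & (forall (k : nat) (a : ps_car P k) (i j : nat), (1 <= i)%N -> (i < j)%N -> (j <= k)%N ->
         forall e : (((k + 1).-1 + 2).-1 = ((k + 2).-1 + 1).-1),
           ps_comp P j.+1 (ps_comp P i a mu) d = ps_tr P e (ps_comp P i (ps_comp P j a d) mu))].

(* mu_(n+1) = mu \bullet_1 mu_n, mu_1 = id ; [ps_mun P mu n] : P_(n+1) *)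
Fixpoint ps_mun (K : fieldType) (P : preShuffle K) (mu : ps_car P 2) (n : nat)
  : ps_car P n.+1 :=
  match n with
  | 0 => ps_id P
  | n'.+1 => ps_comp P 1 mu (ps_mun mu n')
  end.

Lemma addn1_pred (n : nat) : (n + 1).-1 = n.
Proof. by rewrite addn1. Qed.

Definition ps_compD (K : fieldType) (P : preShuffle K) (d : ps_car P 1) (n j : nat)
  (a : ps_car P n) : ps_car P n := ps_tr P (addn1_pred n) (ps_comp P j a d).

Section RAlg.
Variable K : fieldType.

(* coefficient of the word w in                                          *)
(*   P(x_1,..,x_(i-1), x_i+..+x_(i+m-1), x_(i+m),..,x_(n+m-1)) *          *)
(*   Q(x_i,..,x_(i+m-1))                                                  *)
(* for P in K<x_1..x_n>, Q in K<x_1..x_m> (letters are 0-based).         *)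
Definition rc_phi (m i j : nat) : nat :=
  if (j < i.-1)%N then j else if (j < i.-1 + m)%N then i.-1 else (j.+1 - m)%N.
Definition rc_inrange (m i j : nat) : bool := (i.-1 <= j < i.-1 + m)%N.
Definition rc_psi (i j : nat) : nat := (j - i.-1)%N.

Definition rawcomp (n m i : nat) (p q : ncfun K) : ncfun K := fun w =>
  if all (fun j => j < (n + m).-1)%N w then
    \sum_(k < (size w).+1)
       p (map (rc_phi m i) (take k w)) *
       (if all (rc_inrange m i) (drop k w) then q (map (rc_psi i) (drop k w)) else 0)
  else 0.

Lemma rawcomp_closed n m i (p : ncpoly K n) (q : ncpoly K m) :
  ncpoly_pred (n + m).-1 (rawcomp n m i (val p) (val q)).
Proof.
move: (valP p) (valP q) => /asboolP [N1 H1] /asboolP [N2 H2].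
apply/asboolP; exists (N1 + N2)%N => w.
rewrite /rawcomp; case: ifP => al; last by rewrite eqxx.
move=> nz; apply/andP; split=> //.
move: nz; apply: contraR; rewrite -ltnNge => lt.
rewrite big1 // => k _.
have kw : (k <= size w)%N by rewrite -ltnS.
have [hp|hp] := leqP k N1.
  case: ifP => _; last by rewrite mulr0.
  suff -> : val q (map (rc_psi i) (drop k w)) = 0 by rewrite mulr0.
  apply/eqP; apply: (contraNT (H2 _)).
  rewrite size_map size_drop negb_and -ltnNge ltn_subRL.
  by rewrite (leq_ltn_trans (leq_add hp (leqnn N2)) lt).
suff -> : val p (map (rc_phi m i) (take k w)) = 0 by rewrite mul0r.
apply/eqP; apply: (contraNT (H1 _)).
by rewrite size_map size_take_min (minn_idPl kw) negb_and -ltnNge hp.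
Qed.

Definition Rcar (n : nat) : lmodType K := ncpoly K n.

Definition Rcomp (n m : nat) (i : nat) (p : Rcar n) (q : Rcar m) : Rcar (n + m).-1 :=
  Sub (rawcomp n m i (val p) (val q)) (rawcomp_closed i p q).

Definition ncmono (w : seq nat) : ncfun K := fun w' => (w' == w)%:R.

Lemma ncmono_closed n w : all (fun j => j < n)%N w -> ncpoly_pred n (ncmono w).
Proof.
move=> aw; apply/asboolP; exists (size w) => w'.
rewrite /ncmono; case: (eqVneq w' w) => [->|_]; first by rewrite leqnn aw.
by rewrite /= eqxx.
Qed.

Definition Rone (n : nat) : Rcar n := Sub (ncmono [::]) (@ncmono_closed n [::] (erefl true)).
Definition Rx1 : Rcar 1 := Sub (ncmono [:: 0%N]) (@ncmono_closed 1 [:: 0%N] (erefl true)).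

Definition RAlg : preShuffle K := @PreShuffle K Rcar Rcomp (Rone 1).

End RAlg.

Arguments PerAsDer_rel {K} P d mu.
Arguments is_psmorph {K} P Q f.
Arguments ps_mun {K} P mu n.
Arguments ps_compD {K} P d {n} j a.

From HB Require Import structures.
From mathcomp Require Import all_boot all_order all_algebra.
From mathcomp Require Import zify.
From Stdlib Require Import Eqdep_dec FunctionalExtensionality ClassicalEpsilon.

(* In any pre-shuffle algebra P with elements d and mu satisfying the PerAsDer
   relations, attach to a word u = c_1 ... c_k over the letters 0..n the element
   F_n(u) of P_(n+1) obtained from mu_(n+1) by composing d successively at the
   positions c_1 + 1, ..., c_k + 1.  Associativity of mu, the Leibniz rule
   d o_1 mu = mu o_1 d + mu o_2 d and the two commutation relations yield the
   normal form F_n(u) o_i F_m(v) = sum of the F_(n+m)(u' ++ (v shifted by i-1)),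
   where u' runs over the words obtained from u by substituting
   x_i -> x_i + ... + x_(i+m).  In R the element F_n(u) is the monomial u, and
   the same formula holds there.  Hence the linear map sending the monomial u to
   F_n(u) is a morphism taking x_1 to d and 1 to mu, and every such morphism
   agrees with it on the monomials, which span R. *)

Set Implicit Arguments.
Unset Strict Implicit.
Unset Printing Implicit Defensive.

Import GRing.Theory.
Local Open Scope ring_scope.

Section LinearFun.
Variables (K : fieldType) (U V : lmodType K) (f : U -> V).
Hypothesis f_lin : forall (a : K) (x y : U), f (a *: x + y) = a *: f x + f y.

Lemma lin_fun0 : f 0 = 0.
Proof. by have := f_lin (-1) 0 0; rewrite scaler0 addr0 scaleN1r addNr. Qed.

Lemma lin_funD x y : f (x + y) = f x + f y.
Proof. by have := f_lin 1 x y; rewrite !scale1r. Qed.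

Lemma lin_funZ a x : f (a *: x) = a *: f x.
Proof. by have := f_lin a x 0; rewrite !addr0 lin_fun0 addr0. Qed.

Lemma lin_fun_sum (T : Type) (s : seq T) (F : T -> U) :
  f (\sum_(t <- s) F t) = \sum_(t <- s) f (F t).
Proof. exact: (big_morph f lin_funD lin_fun0). Qed.

Lemma lin_fun_lsum (T : Type) (s : seq T) (c : T -> K) (F : T -> U) :
  f (\sum_(t <- s) c t *: F t) = \sum_(t <- s) c t *: f (F t).
Proof. by rewrite lin_fun_sum; apply: eq_bigr => t _; rewrite lin_funZ. Qed.

End LinearFun.

(* Arities such as [(l + (m + n).-1).-1] and [((l + m).-1 + n).-1] are equal
   only propositionally, so equations between operations are stated between
   their images in the total space [{n & P_n}]. *)
Section Pack.
Variables (K : fieldType) (P : preShuffle K).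

Definition ps_pack (n : nat) (x : ps_car P n) : {n : nat & ps_car P n} := existT _ n x.

Lemma ps_pack_inj n (x y : ps_car P n) : ps_pack x = ps_pack y -> x = y.
Proof. exact: (inj_pair2_eq_dec nat PeanoNat.Nat.eq_dec (fun k => ps_car P k) n x y). Qed.

Lemma ps_pack_tr a b (e : a = b) (x : ps_car P a) : ps_pack (ps_tr P e x) = ps_pack x.
Proof. by case: b / e. Qed.

Lemma ps_pack_arity a b (x : ps_car P a) (y : ps_car P b) : ps_pack x = ps_pack y -> a = b.
Proof. by move/(f_equal (@projT1 _ _)). Qed.

Lemma ps_pack_comp i a a' b b' (x : ps_car P a) (x' : ps_car P a')
    (y : ps_car P b) (y' : ps_car P b') :
  ps_pack x = ps_pack x' -> ps_pack y = ps_pack y' ->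
  ps_pack (ps_comp P i x y) = ps_pack (ps_comp P i x' y').
Proof.
move=> Ex Ey; have ea := ps_pack_arity Ex; have eb := ps_pack_arity Ey.
case: a' / ea x' Ex => x' /ps_pack_inj ->.
by case: b' / eb y' Ey => y' /ps_pack_inj ->.
Qed.

Lemma ps_pack_compl i a a' b (x : ps_car P a) (x' : ps_car P a') (y : ps_car P b) :
  ps_pack x = ps_pack x' -> ps_pack (ps_comp P i x y) = ps_pack (ps_comp P i x' y).
Proof. by move=> Ex; apply: ps_pack_comp. Qed.

Lemma ps_pack_compr i a b b' (x : ps_car P a) (y : ps_car P b) (y' : ps_car P b') :
  ps_pack y = ps_pack y' -> ps_pack (ps_comp P i x y) = ps_pack (ps_comp P i x y').
Proof. by move=> Ey; apply: ps_pack_comp. Qed.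

Lemma ps_pack_add a a' (x y : ps_car P a) (x' y' : ps_car P a') :
  ps_pack x = ps_pack x' -> ps_pack y = ps_pack y' -> ps_pack (x + y) = ps_pack (x' + y').
Proof.
move=> Ex Ey; have ea := ps_pack_arity Ex; case: a' / ea x' y' Ex Ey.
by move=> x' y' /ps_pack_inj -> /ps_pack_inj ->.
Qed.

Lemma ps_pack_sum (T : Type) (s : seq T) a a' (F : T -> ps_car P a) (F' : T -> ps_car P a') :
  a = a' -> (forall t, ps_pack (F t) = ps_pack (F' t)) ->
  ps_pack (\sum_(t <- s) F t) = ps_pack (\sum_(t <- s) F' t).
Proof.
move=> ea; case: a' / ea F' => F' EF.
by congr ps_pack; apply: eq_bigr => t _; apply: ps_pack_inj.
Qed.

Lemma ps_pack_compD n j (d : ps_car P 1) (a : ps_car P n) :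
  ps_pack (ps_compD P d j a) = ps_pack (ps_comp P j a d).
Proof. exact: ps_pack_tr. Qed.

End Pack.

Lemma ps_pack_map (K : fieldType) (P Q : preShuffle K)
    (f : forall k, ps_car P k -> ps_car Q k) a b (x : ps_car P a) (y : ps_car P b) :
  ps_pack x = ps_pack y -> ps_pack (f a x) = ps_pack (f b y).
Proof.
by move=> Exy; have eab := ps_pack_arity Exy; case: b / eab y Exy => y /ps_pack_inj ->.
Qed.

Section PreShuffleTheory.
Variables (K : fieldType) (P : preShuffle K).
Hypothesis HP : is_preShuffle P.

Local Notation comp := (ps_comp P).

Lemma ps_comp_linl m n i (y : ps_car P n) : (0 < n)%N -> (1 <= i <= m)%N ->
  forall a (x1 x2 : ps_car P m), comp i (a *: x1 + x2) y = a *: comp i x1 y + comp i x2 y.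
Proof. by case: HP => H _ _ _ _ hn hi a x1 x2; apply: H. Qed.

Lemma ps_comp_linr m n i (x : ps_car P m) : (0 < n)%N -> (1 <= i <= m)%N ->
  forall a (y1 y2 : ps_car P n), comp i x (a *: y1 + y2) = a *: comp i x y1 + comp i x y2.
Proof. by case: HP => _ H _ _ _ hn hi a y1 y2; apply: H. Qed.

Lemma ps_comp_suml (T : Type) (s : seq T) m n i (F : T -> ps_car P m) (y : ps_car P n) :
  (0 < n)%N -> (1 <= i <= m)%N ->
  comp i (\sum_(t <- s) F t) y = \sum_(t <- s) comp i (F t) y.
Proof. by move=> hn hi; apply: (lin_fun_sum (f := comp i ^~ y)); apply: ps_comp_linl. Qed.

Lemma ps_comp_sumr (T : Type) (s : seq T) m n i (x : ps_car P m) (F : T -> ps_car P n) :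
  (0 < n)%N -> (1 <= i <= m)%N ->
  comp i x (\sum_(t <- s) F t) = \sum_(t <- s) comp i x (F t).
Proof. by move=> hn hi; apply: (lin_fun_sum (f := comp i x)); apply: ps_comp_linr. Qed.

Lemma ps_comp_lsum2 m n i (s1 s2 : seq (seq nat)) (a b : seq nat -> K)
    (X : seq nat -> ps_car P m) (Y : seq nat -> ps_car P n) :
  (0 < n)%N -> (1 <= i <= m)%N ->
  comp i (\sum_(u <- s1) a u *: X u) (\sum_(v <- s2) b v *: Y v)
  = \sum_(u <- s1) a u *: \sum_(v <- s2) b v *: comp i (X u) (Y v).
Proof.
move=> hn hi.
rewrite (lin_fun_lsum (f := comp i ^~ _) (ps_comp_linl _ hn hi)).
by apply: eq_bigr => u _; rewrite (lin_fun_lsum (f := comp i _) (ps_comp_linr _ hn hi)).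
Qed.

Lemma ps_packA l m n i j k (x : ps_car P l) (y : ps_car P m) (z : ps_car P n) :
  (0 < n)%N -> (1 <= i <= l)%N -> (1 <= j <= m)%N -> k = (i.-1 + j)%N ->
  ps_pack (comp k (comp i x y) z) = ps_pack (comp i x (comp j y z)).
Proof.
move=> hn hi hj ->; have e : (l + (m + n).-1).-1 = ((l + m).-1 + n).-1 by lia.
by case: HP => _ _ H _ _; rewrite (H l m n i j hn hi hj x y z e) ps_pack_tr.
Qed.

Lemma ps_pack_id_comp n (x : ps_car P n.+1) : ps_pack (comp 1 (ps_id P) x) = ps_pack x.
Proof. by case: HP => _ _ _ H _; rewrite H. Qed.

Lemma ps_pack_comp_id n i (x : ps_car P n) :
  (1 <= i <= n)%N -> ps_pack (comp i x (ps_id P)) = ps_pack x.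
Proof.
move=> hi; have e : (n + 1).-1 = n by lia.
by case: HP => _ _ _ _ H; rewrite -[in RHS](H n i x hi e) ps_pack_tr.
Qed.

End PreShuffleTheory.

(* The images of a letter [c] (i.e. of the variable x_(c+1)) under the
   substitution performed by [_ \bullet_i Q] with [Q] of arity [m + 1]. *)
Definition subst_letter (i m c : nat) : seq nat :=
  if (c.+1 < i)%N then [:: c] else if c.+1 == i then iota c m.+1 else [:: (c + m)%N].

Definition subst_word (i m : nat) (u : seq nat) : seq (seq nat) :=
  foldl (fun S c => [seq rcons u' c' | c' <- subst_letter i m c, u' <- S]) [:: [::]] u.

Lemma subst_word_rcons i m u c :
  subst_word i m (rcons u c) = [seq rcons u' c' | c' <- subst_letter i m c, u' <- subst_word i m u].
Proof. by rewrite /subst_word foldl_rcons. Qed.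

Lemma subst_word_letters m n i u : all (fun c => c < m.+1)%N u -> (1 <= i <= m.+1)%N ->
  forall u', u' \in subst_word i n u -> all (fun c => c < (m + n).+1)%N u'.
Proof.
move=> + hi; elim/last_ind: u => [_ u'|u c IH]; first by rewrite mem_seq1 => /eqP ->.
rewrite all_rcons => /andP[hc hu] u'; rewrite subst_word_rcons.
case/allpairsP => [[c' u''] /= [hc' hu'' ->]]; rewrite all_rcons (IH hu _ hu'') andbT.
by move: hc'; rewrite /subst_letter; do 2?case: ifP => _; rewrite ?mem_seq1 ?mem_iota => /=; lia.
Qed.

Lemma big_iota_ord (V : zmodType) c m (G : nat -> V) :
  \sum_(c' <- iota c m) G c' = \sum_(t < m) G (c + t)%N.
Proof.
rewrite -{1}[c]addn0 iotaDl big_map -(big_mkord xpredT (fun t => G (c + t)%N)).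
by rewrite /index_iota subn0.
Qed.

Section PerAsDerCalculus.
Variables (K : fieldType) (P : preShuffle K) (d : ps_car P 1) (mu : ps_car P 2).
Hypotheses (HP : is_preShuffle P) (HR : PerAsDer_rel P d mu).

Local Notation comp := (ps_comp P).
Local Notation pk := (@ps_pack _ P _).
Local Notation M := (ps_mun P mu).

Lemma ps_pack_compD_mu k (A : ps_car P k) i j : (1 <= i)%N -> (i < j)%N -> (j <= k)%N ->
  pk (comp j (comp i A d) mu) = pk (comp i (comp j A mu) d).
Proof.
move=> h1 h2 h3; have e : ((k + 2).-1 + 1).-1 = ((k + 1).-1 + 2).-1 by lia.
by case: HR => _ _ H _; rewrite (H k A i j h1 h2 h3 e) ps_pack_tr.
Qed.

Lemma ps_pack_compmu_D k (A : ps_car P k) i j : (1 <= i)%N -> (i < j)%N -> (j <= k)%N ->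
  pk (comp j.+1 (comp i A mu) d) = pk (comp i (comp j A d) mu).
Proof.
move=> h1 h2 h3; have e : ((k + 1).-1 + 2).-1 = ((k + 2).-1 + 1).-1 by lia.
by case: HR => _ _ _ H; rewrite (H k A i j h1 h2 h3 e) ps_pack_tr.
Qed.

Lemma mu_comp2_mun b : pk (comp 2 mu (M b)) = pk (comp 1 mu (M b)).
Proof.
elim: b => [|b IH]; first by rewrite /= !(ps_pack_comp_id HP (n := 2)).
rewrite -(ps_packA HP (i := 2) (j := 1) (k := 2) mu mu (M b)) //.
case: HR => <- _ _ _.
by rewrite (ps_packA HP (i := 1) (j := 2) mu mu (M b)) //; apply: ps_pack_compr.
Qed.

Lemma mun_comp_mun a b i : (1 <= i <= a.+1)%N -> pk (comp i (M a) (M b)) = pk (M (a + b)).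
Proof.
elim: a i => [|a IH] i hi.
  have -> : i = 1%N by lia.
  by rewrite /= ps_pack_id_comp.
have [->|hi2] := eqVneq i 1%N.
  rewrite (ps_packA HP (i := 1) (j := 1) mu (M a) (M b)) //.
  by apply: ps_pack_compr; apply: IH.
rewrite (ps_pack_compl _ _ (esym (mu_comp2_mun a))).
rewrite (ps_packA HP (i := 2) (j := i.-1) mu (M a) (M b)) //; try lia.
by rewrite (ps_pack_compr _ _ (IH _ _)) ?mu_comp2_mun //; lia.
Qed.

Lemma compD_mun_lt m k (A : ps_car P k) a j : (1 <= a)%N -> (a < j)%N -> (j <= k)%N ->
  pk (comp j (comp a A d) (M m)) = pk (comp a (comp j A (M m)) d).
Proof.
elim: m k A a j => [|m IH] k A a j h1 h2 h3.
  rewrite (ps_pack_comp_id HP (comp a A d)); last by lia.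
  by apply: ps_pack_compl; rewrite ps_pack_comp_id //; lia.
rewrite -(ps_packA HP (i := j) (j := 1) (k := j) (comp a A d) mu (M m)) //; try lia.
rewrite (ps_pack_compl j (M m) (ps_pack_compD_mu A h1 h2 h3)).
rewrite (IH _ (comp j A mu) a j) //; try lia.
by apply: ps_pack_compl; rewrite (ps_packA HP (i := j) (j := 1) (k := j)) //; lia.
Qed.

Lemma compD_mun_gt m k (A : ps_car P k) i a : (1 <= i)%N -> (i < a)%N -> (a <= k)%N ->
  pk (comp i (comp a A d) (M m)) = pk (comp (a + m) (comp i A (M m)) d).
Proof.
elim: m k A i a => [|m IH] k A i a h1 h2 h3.
  rewrite addn0 (ps_pack_comp_id HP (comp a A d)); last by lia.
  by apply: ps_pack_compl; rewrite ps_pack_comp_id //; lia.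
rewrite -(ps_packA HP (i := i) (j := 1) (k := i) (comp a A d) mu (M m)) //; try lia.
rewrite (ps_pack_compl i (M m) (esym (ps_pack_compmu_D A h1 h2 h3))).
rewrite (IH _ (comp i A mu) i a.+1) //; try lia.
rewrite addSnnS; apply: ps_pack_compl.
by rewrite (ps_packA HP (i := i) (j := 1) (k := i)) //; lia.
Qed.

Lemma D_comp_mun m : pk (comp 1 d (M m)) = pk (\sum_(t < m.+1) comp t.+1 (M m) d).
Proof.
elim: m => [|m IH]; first by rewrite big_ord1 /= (ps_pack_comp_id HP d) // ps_pack_id_comp.
rewrite /= -(ps_packA HP (i := 1) (j := 1) (k := 1) d mu (M m)) //.
case: HR => _ -> _ _.
rewrite (lin_funD (f := comp 1 ^~ _) (ps_comp_linl HP _ _ _)) // big_ord_recr.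
apply: ps_pack_add; last by rewrite (compD_mun_gt m mu (i := 1) (a := 2)) // addnC.
rewrite (ps_packA HP (i := 1) (j := 1) (k := 1) mu d (M m)) //.
rewrite (ps_pack_compr 1 mu IH) ps_comp_sumr //; try lia.
apply: ps_pack_sum => [|t]; first by lia.
by rewrite (ps_packA HP (i := 1) (j := t.+1) (k := t.+1) mu (M m) d) //; move: (ltn_ord t); lia.
Qed.

Lemma compD_mun_eq m k (A : ps_car P k) i : (1 <= i <= k)%N ->
  pk (comp i (comp i A d) (M m)) = pk (\sum_(t < m.+1) comp (i + t) (comp i A (M m)) d).
Proof.
move=> hi; rewrite (ps_packA HP (i := i) (j := 1) (k := i) A d (M m)) //; last by lia.
rewrite (ps_pack_compr i A (D_comp_mun m)) ps_comp_sumr //; try lia.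
apply: ps_pack_sum => [|t]; first by lia.
by rewrite (ps_packA HP (i := i) (j := t.+1) (k := i + t) A (M m) d) //; move: (ltn_ord t); lia.
Qed.

Definition word_elt n (u : seq nat) : ps_car P n.+1 :=
  foldl (fun a c => ps_compD P d c.+1 a) (M n) u.

Lemma word_elt_rcons n u c : word_elt n (rcons u c) = ps_compD P d c.+1 (word_elt n u).
Proof. by rewrite /word_elt foldl_rcons. Qed.

Lemma word_elt_comp_mun n m i u : all (fun c => c < n.+1)%N u -> (1 <= i <= n.+1)%N ->
  pk (comp i (word_elt n u) (M m)) = pk (\sum_(u' <- subst_word i m u) word_elt (n + m) u').
Proof.
move=> + hi; elim/last_ind: u => [_|u c IH].
  by rewrite big_seq1 mun_comp_mun.
rewrite all_rcons => /andP[hc hu].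
rewrite word_elt_rcons (ps_pack_compl i (M m) (ps_pack_compD _ _ _)).
rewrite subst_word_rcons big_allpairs_dep /subst_letter.
have Eword u' c' : pk (word_elt (n + m) (rcons u' c')) = pk (comp c'.+1 (word_elt (n + m) u') d).
  by rewrite word_elt_rcons ps_pack_compD.
have [hlt|hge] := ltnP c.+1 i.
  rewrite big_seq1 (compD_mun_lt m (word_elt n u) (a := c.+1) (j := i)) //; try lia.
  rewrite (ps_pack_compl c.+1 d (IH hu)) ps_comp_suml //; try lia.
  by apply: ps_pack_sum => [|u']; [lia | rewrite Eword].
have [eci|neci] := eqVneq c.+1 i.
  rewrite -eci (compD_mun_eq m (word_elt n u)) //; try lia.
  rewrite big_iota_ord; apply: ps_pack_sum => [|t]; first by lia.
  rewrite -eci in IH; rewrite (ps_pack_compl _ d (IH hu)) ps_comp_suml //; try (move: (ltn_ord t); lia).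
  by apply: ps_pack_sum => [|u']; [lia | rewrite Eword (addSn c t)].
rewrite big_seq1 (compD_mun_gt m (word_elt n u) (i := i) (a := c.+1)) //; try lia.
rewrite (ps_pack_compl _ d (IH hu)) ps_comp_suml //; try lia.
by apply: ps_pack_sum => [|u']; [lia | rewrite Eword (addSn c m)].
Qed.

Lemma word_elt_comp n m i u v : all (fun c => c < n.+1)%N u -> all (fun c => c < m.+1)%N v ->
  (1 <= i <= n.+1)%N ->
  pk (comp i (word_elt n u) (word_elt m v))
  = pk (\sum_(u' <- subst_word i m u) word_elt (n + m) (u' ++ map (addn i.-1) v)).
Proof.
move=> hu + hi; elim/last_ind: v => [_|v c IH].
  by rewrite word_elt_comp_mun //; apply: ps_pack_sum => // u'; rewrite cats0.
rewrite all_rcons => /andP[hc hv].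
rewrite word_elt_rcons (ps_pack_compr i (word_elt n u) (ps_pack_compD _ _ _)).
rewrite -(ps_packA HP (i := i) (j := c.+1) (k := i.-1 + c.+1) (word_elt n u) (word_elt m v) d) //; try lia.
rewrite (ps_pack_compl _ d (IH hv)) ps_comp_suml //; try lia.
apply: ps_pack_sum => [|u']; first by lia.
by rewrite map_rcons -rcons_cat word_elt_rcons ps_pack_compD (addnS i.-1 c).
Qed.

End PerAsDerCalculus.

Section LetterMaps.
Variables (l m n i j : nat).
Hypotheses (hi : (1 <= i <= l)%N) (hj : (1 <= j <= m)%N) (hn : (0 < n)%N).

Lemma rc_phi_phi c : rc_phi m i (rc_phi n (i.-1 + j) c) = rc_phi (m + n).-1 i c.
Proof. by rewrite /rc_phi; repeat case: ifP; lia. Qed.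

Lemma rc_inrange_phi c : rc_inrange m i (rc_phi n (i.-1 + j) c) = rc_inrange (m + n).-1 i c.
Proof. by rewrite /rc_phi /rc_inrange; apply/idP/idP; repeat case: ifP; lia. Qed.

Lemma rc_psi_phi c : rc_inrange (m + n).-1 i c ->
  rc_psi i (rc_phi n (i.-1 + j) c) = rc_phi n j (rc_psi i c).
Proof. by rewrite /rc_phi /rc_inrange /rc_psi; repeat case: ifP; lia. Qed.

Lemma rc_inrange_psi c :
  rc_inrange n (i.-1 + j) c = rc_inrange (m + n).-1 i c && rc_inrange n j (rc_psi i c).
Proof. by rewrite /rc_inrange /rc_psi; apply/idP/idP; lia. Qed.

Lemma rc_psi_psi c : rc_psi (i.-1 + j) c = rc_psi j (rc_psi i c).
Proof. by rewrite /rc_psi; lia. Qed.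

Lemma rc_phi_lt c : (c < ((l + m).-1 + n).-1)%N -> (rc_phi n (i.-1 + j) c < (l + m).-1)%N.
Proof. by rewrite /rc_phi; repeat case: ifP; lia. Qed.

Lemma rc_psi_lt c : rc_inrange (m + n).-1 i c -> (rc_psi i c < (m + n).-1)%N.
Proof. by rewrite /rc_inrange /rc_psi; lia. Qed.

End LetterMaps.

Lemma big_nat_triangle (V : zmodType) s (F : nat -> nat -> V) :
  \sum_(0 <= k < s.+1) \sum_(0 <= k' < k.+1) F k' k =
  \sum_(0 <= k' < s.+1) \sum_(0 <= t < (s - k').+1) F k' (k' + t)%N.
Proof.
elim: s => [|s IH]; first by rewrite !big_nat1 addn0.
rewrite big_nat_recr //= IH [in RHS]big_nat_recr //= subnn big_nat1 addn0.
rewrite [in RHS](eq_big_nat _ _ (F2 := fun k' =>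
  \sum_(0 <= t < (s - k').+1) F k' (k' + t)%N + F k' s.+1)); last first.
  by move=> k' /andP[_ hk']; rewrite subSn // big_nat_recr //=; congr (_ + F k' _); lia.
by rewrite big_split /= -addrA -big_nat_recr.
Qed.

(* Both sides of the associativity axiom expand into a double sum over the
   two cut points [k' <= k] of the word [w]; [assoc_termL] and [assoc_termR]
   are the summands of the two expansions, indexed by [(k', k)] and by
   [(k', k - k')]. *)
Section RawAssociativity.
Variables (K : fieldType) (l m n i j : nat).
Hypotheses (hi : (1 <= i <= l)%N) (hj : (1 <= j <= m)%N) (hn : (0 < n)%N).
Variables (X Y Z : ncfun K) (w : seq nat).
Hypothesis hw : all (fun c => c < ((l + m).-1 + n).-1)%N w.

Local Notation phi2 := (rc_phi n (i.-1 + j)).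
Local Notation in2 := (rc_inrange n (i.-1 + j)).
Local Notation psi2 := (rc_psi (i.-1 + j)).
Local Notation phi1 := (rc_phi m i).
Local Notation psi1 := (rc_psi i).
Local Notation phi1' := (rc_phi (m + n).-1 i).
Local Notation in1' := (rc_inrange (m + n).-1 i).

Definition assoc_termL k' k :=
  X (map phi1' (take k' w)) *
  (if all in1' (take (k - k') (drop k' w))
   then Y (map (psi1 \o phi2) (take (k - k') (drop k' w))) else 0) *
  (if all in2 (drop k w) then Z (map psi2 (drop k w)) else 0).

Definition assoc_termR k' t :=
  if all in1' (drop k' w) then
    X (map phi1' (take k' w)) *
    (Y (map (rc_phi n j) (take t (map psi1 (drop k' w)))) *
     (if all (rc_inrange n j) (drop t (map psi1 (drop k' w)))
      then Z (map (rc_psi j) (drop t (map psi1 (drop k' w)))) else 0))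
  else 0.

Lemma rawcomp_expandl k : (k <= size w)%N ->
  rawcomp l m i X Y (map phi2 (take k w)) *
  (if all in2 (drop k w) then Z (map psi2 (drop k w)) else 0)
  = \sum_(0 <= k' < k.+1) assoc_termL k' k.
Proof.
move=> hk; rewrite /rawcomp.
have -> : all (fun c => c < (l + m).-1)%N (map phi2 (take k w)).
  apply/allP => c /mapP [c' hc' ->]; apply: (rc_phi_lt hi hj hn).
  exact: (allP hw) c' (mem_take hc').
rewrite size_map size_takel // mulr_suml big_mkord.
apply: eq_bigr => k' _; have hk' := ltn_ord k'.
rewrite /assoc_termL -map_take take_takel; last by lia.
rewrite -map_drop.
have -> : drop k' (take k w) = take (k - k') (drop k' w) by rewrite take_drop subnK.
rewrite -map_comp (eq_map (rc_phi_phi hi hj hn)) all_map (eq_all (rc_inrange_phi hi hj hn)).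
by rewrite -map_comp.
Qed.

Lemma rawcomp_expandr k' : (k' <= size w)%N ->
  X (map phi1' (take k' w)) *
  (if all in1' (drop k' w) then rawcomp m n j Y Z (map psi1 (drop k' w)) else 0)
  = \sum_(0 <= t < (size w - k').+1) assoc_termR k' t.
Proof.
move=> hk'; rewrite /assoc_termR; case: ifP => hin; last by rewrite mulr0 big1.
rewrite /rawcomp.
have -> : all (fun c => c < (m + n).-1)%N (map psi1 (drop k' w)).
  by apply/allP => c /mapP [c' hc' ->]; apply: (rc_psi_lt hi hj hn); exact: (allP hin) c' hc'.
by rewrite size_map size_drop mulr_sumr big_mkord.
Qed.

Lemma assoc_termLR k' t : (k' + t <= size w)%N -> assoc_termL k' (k' + t) = assoc_termR k' t.
Proof.
move=> h; rewrite /assoc_termL /assoc_termR addKn.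
have -> : drop (k' + t) w = drop t (drop k' w) by rewrite drop_drop (addnC t).
rewrite -map_take -map_drop.
set b := take t (drop k' w); set cs := drop t (drop k' w).
have -> : drop k' w = b ++ cs by rewrite cat_take_drop.
have -> : all in2 cs = all in1' cs && all (rc_inrange n j) (map psi1 cs).
  by rewrite all_map -all_predI; apply: eq_all => c; rewrite /= (rc_inrange_psi hi hj hn).
have -> : map psi2 cs = map (rc_psi j) (map psi1 cs).
  by rewrite -map_comp; apply: eq_map => c; rewrite /= (rc_psi_psi hi hj hn).
rewrite all_cat; case hb: (all in1' b); last by rewrite /= mulr0 mul0r.
case: (all in1' cs); last by rewrite /= mulr0.
rewrite /= -mulrA; congr (_ * (Y _ * _)).
rewrite -map_comp; apply/eq_in_map => c hcb /=.
by rewrite (rc_psi_phi hi hj hn) //; exact: (allP hb) c hcb.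
Qed.

Lemma rawcompA :
  rawcomp (l + m).-1 n (i.-1 + j) (rawcomp l m i X Y) Z w
  = rawcomp l (m + n).-1 i X (rawcomp m n j Y Z) w.
Proof.
have arity : ((l + m).-1 + n).-1 = (l + (m + n).-1).-1 by lia.
have -> : rawcomp (l + m).-1 n (i.-1 + j) (rawcomp l m i X Y) Z w =
  \sum_(0 <= k < (size w).+1) rawcomp l m i X Y (map phi2 (take k w)) *
     (if all in2 (drop k w) then Z (map psi2 (drop k w)) else 0).
  by rewrite {1}/rawcomp hw big_mkord.
have -> : rawcomp l (m + n).-1 i X (rawcomp m n j Y Z) w =
  \sum_(0 <= k' < (size w).+1) X (map phi1' (take k' w)) *
     (if all in1' (drop k' w) then rawcomp m n j Y Z (map psi1 (drop k' w)) else 0).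
  by rewrite {1}/rawcomp -arity hw big_mkord.
rewrite (eq_big_nat _ _ (F2 := fun k => \sum_(0 <= k' < k.+1) assoc_termL k' k)); last first.
  by move=> k /andP[_ hk]; apply: rawcomp_expandl; lia.
rewrite big_nat_triangle; apply: eq_big_nat => k' /andP[_ hk'].
rewrite rawcomp_expandr; last by lia.
by apply: eq_big_nat => t /andP[_ ht]; apply: assoc_termLR; lia.
Qed.

End RawAssociativity.

Section NCPolyAlgebra.
Variable K : fieldType.
Local Notation R := (RAlg K).

Lemma ncpoly_ext n (x y : ncpoly K n) : (forall w, val x w = val y w) -> x = y.
Proof. by move=> Exy; apply: val_inj; apply: functional_extensionality. Qed.

Lemma val_ncpolyD n (x y : ncpoly K n) w : val (x + y) w = val x w + val y w.
Proof. by []. Qed.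

Lemma val_ncpolyZ n (a : K) (x : ncpoly K n) w : val (a *: x) w = a * val x w.
Proof. by []. Qed.

Lemma val_ncpoly_sum n (s : seq (seq nat)) (G : seq nat -> ncpoly K n) w :
  val (\sum_(u <- s) G u) w = \sum_(u <- s) val (G u) w.
Proof. by apply: (big_morph (fun x : ncpoly K n => val x w)) => [x y|]. Qed.

Lemma val_ps_tr a b (e : a = b) (x : ps_car R a) :
  val (ps_tr R e x : Rcar K b) = val (x : Rcar K a).
Proof. by case: b / e. Qed.

Lemma ncpoly_val_out n (x : ncpoly K n) w : ~~ all (fun j => j < n)%N w -> val x w = 0.
Proof.
move=> hw; have /asboolP [N H] := valP x.
by apply/eqP/negPn/negP => /H /andP [_ hw']; rewrite hw' in hw.
Qed.

Lemma rawcomp_ncmono n m i p v w :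
  rawcomp n m i p (ncmono K v) w =
  if all (fun j => j < (n + m).-1)%N w && (size v <= size w)%N then
    p (map (rc_phi m i) (take (size w - size v) w)) *
    (if all (rc_inrange m i) (drop (size w - size v) w)
     then (map (rc_psi i) (drop (size w - size v) w) == v)%:R else 0)
  else 0.
Proof.
rewrite /rawcomp; case: ifP => hw //=.
have hterm k : (k <= size w)%N -> (size w - k)%N <> size v ->
   p (map (rc_phi m i) (take k w)) *
   (if all (rc_inrange m i) (drop k w) then ncmono K v (map (rc_psi i) (drop k w)) else 0) = 0.
  move=> hk hne; case: ifP => _; last by rewrite mulr0.
  rewrite /ncmono; case: eqP => [Ev|]; last by rewrite mulr0.
  by move: hne; rewrite -Ev size_map size_drop.
case: leqP => hv; last by rewrite big1 // => k _; apply: hterm; [rewrite -ltnS | lia].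
pose k0 : 'I_(size w).+1 := Ordinal (leq_ltn_trans (leq_subr (size v) (size w)) (ltnSn _)).
rewrite (bigD1 k0) //= big1 ?addr0 // => k hk; apply: hterm; first by rewrite -ltnS.
move=> Ek; move: hk; rewrite -(inj_eq val_inj) /= => /eqP; apply.
by move: (ltn_ord k); lia.
Qed.

Lemma map_rc_phi1 i w : map (rc_phi 1 i) w = w.
Proof. by rewrite (@eq_map _ _ _ id) ?map_id // => j; rewrite /rc_phi; repeat case: ifP; lia. Qed.

Lemma val_Rcomp_one n m i (x : Rcar K n) w : (1 <= i <= n)%N -> (0 < m)%N ->
  val (Rcomp i x (Rone K m)) w = val x (map (rc_phi m i) w).
Proof.
move=> hi hm; rewrite /= rawcomp_ncmono /= leq0n andbT subn0 take_size drop_size /=.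
case: ifP => hw; first by rewrite mulr1.
symmetry; apply: ncpoly_val_out; apply: contra (negbT hw) => h.
apply/allP => c hc; have := allP h _ (map_f (rc_phi m i) hc).
by rewrite /rc_phi; repeat case: ifP; lia.
Qed.

Lemma val_Rcomp_onel n m (q : Rcar K n) w : (0 < m)%N -> val (Rcomp 1 (Rone K m) q) w = val q w.
Proof.
move=> hm; rewrite /= /rawcomp; case: ifP => hw; last first.
  by symmetry; apply: ncpoly_val_out; apply: contra (negbT hw); apply: sub_all => j /=; lia.
rewrite big_ord_recl big1 ?addr0 => [|k _].
  rewrite /ncmono /= take0 drop0 /= mul1r.
  rewrite (@eq_map _ _ (rc_psi 1) id) ?map_id // => [|j]; last by rewrite /rc_psi subn0.
  case: ifP => // hin; symmetry; apply: ncpoly_val_out; apply: contra (negbT hin).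
  by apply: sub_all => j /=; rewrite /rc_inrange; lia.
rewrite /ncmono /=; case: eqP => [|_]; last by rewrite mul0r.
move/(congr1 size); rewrite size_map size_take /= /bump /= => Ek.
by exfalso; move: Ek (ltn_ord k); case: ltnP; lia.
Qed.

Lemma val_Rcomp_x1_nil n i (x : Rcar K n) : val (Rcomp i x (Rx1 K)) [::] = 0.
Proof. by rewrite /= rawcomp_ncmono. Qed.

Lemma val_Rcomp_x1_rcons n i (x : Rcar K n) w c : (1 <= i <= n)%N ->
  val (Rcomp i x (Rx1 K)) (rcons w c) = (c == i.-1)%:R * val x w.
Proof.
move=> hi; rewrite /= rawcomp_ncmono /= size_rcons ltn0Sn andbT subn1 /=.
rewrite -cats1 take_size_cat // drop_size_cat //= map_rc_phi1 andbT.
have -> : (n + 1).-1 = n by lia.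
rewrite all_cat /= andbT /rc_inrange /rc_psi.
case: (eqVneq c i.-1) => [->|hc].
  rewrite leqnn addn1 ltnSn subnn /= mulr1 mul1r.
  by case: ifP => // hw; symmetry; apply: ncpoly_val_out; apply/negP => h; rewrite h /= in hw; lia.
by rewrite mul0r; case: ifP => _ //; case: ifP; [lia | rewrite mulr0].
Qed.

Lemma Rcomp_linl m n i (a : K) (x1 x2 : ps_car R m) (y : ps_car R n) :
  ps_comp R i (a *: x1 + x2) y = a *: ps_comp R i x1 y + ps_comp R i x2 y.
Proof.
apply: ncpoly_ext => w; rewrite val_ncpolyD val_ncpolyZ /= /rawcomp.
case: ifP => _; last by rewrite mulr0 addr0.
by rewrite mulr_sumr -big_split; apply: eq_bigr => k _; rewrite mulrDl mulrA.
Qed.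

Lemma Rcomp_linr m n i (a : K) (x : ps_car R m) (y1 y2 : ps_car R n) :
  ps_comp R i x (a *: y1 + y2) = a *: ps_comp R i x y1 + ps_comp R i x y2.
Proof.
apply: ncpoly_ext => w; rewrite val_ncpolyD val_ncpolyZ /= /rawcomp.
case: ifP => _; last by rewrite mulr0 addr0.
rewrite mulr_sumr -big_split; apply: eq_bigr => k _.
by case: ifP => _; [rewrite mulrDr mulrCA | rewrite !mulr0 /= addr0].
Qed.

Lemma R_is_preShuffle : is_preShuffle R.
Proof.
split=> [m n i _ _|m n i _ _|l m n i j hn hi hj x y z e|n x|n i x hi e].
- exact: Rcomp_linl.
- exact: Rcomp_linr.
- apply: ncpoly_ext => w; rewrite val_ps_tr /=.
  have [hw|hw] := boolP (all (fun c => c < ((l + m).-1 + n).-1)%N w); first exact: rawcompA.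
  have arity : ((l + m).-1 + n).-1 = (l + (m + n).-1).-1 by lia.
  by rewrite /rawcomp (negbTE hw) -arity (negbTE hw).
- by apply: ncpoly_ext => w; rewrite val_Rcomp_onel.
- by apply: ncpoly_ext => w; rewrite val_ps_tr val_Rcomp_one // map_rc_phi1.
Qed.

Lemma rc_phi21_eq0 c : (rc_phi 2 1 c == 0%N) = (c < 2)%N.
Proof. by rewrite /rc_phi; apply/idP/idP; repeat case: ifP; lia. Qed.

Lemma rc_phi2_eq_lt i j c : (1 <= i)%N -> (i < j)%N -> (rc_phi 2 j c == i.-1) = (c == i.-1).
Proof. by move=> h1 h2; rewrite /rc_phi; apply/idP/idP; repeat case: ifP; lia. Qed.

Lemma rc_phi2_eq_gt i j c : (1 <= i)%N -> (i < j)%N -> (rc_phi 2 i c == j.-1) = (c == j).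
Proof. by move=> h1 h2; rewrite /rc_phi; apply/idP/idP; repeat case: ifP; lia. Qed.

Lemma val_Rone n : val (Rone K n) = ncmono K [::]. Proof. by []. Qed.
Lemma val_Rx1 : val (Rx1 K) = ncmono K [:: 0%N]. Proof. by []. Qed.
Lemma R_PerAsDer_rel : PerAsDer_rel R (Rx1 K) (Rone K 2).
Proof.
split=> [||k a i j h1 h2 h3 e|k a i j h1 h2 h3 e]; apply: ncpoly_ext => w.
- by rewrite val_Rcomp_onel // val_Rcomp_one // val_Rone /ncmono -!size_eq0 size_map.
- rewrite val_ncpolyD val_Rcomp_one // val_Rx1 /ncmono.
  case/lastP: w => [|w c]; first by rewrite !(val_Rcomp_x1_nil _ (Rone K 2)) addr0.
  rewrite !(val_Rcomp_x1_rcons (Rone K 2)) // val_Rone /ncmono map_rcons.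
  rewrite -[[:: 0%N]]/(rcons [::] 0%N) eqseq_rcons -!size_eq0 size_map rc_phi21_eq0.
  case: (size w == 0)%N; rewrite ?mulr1 ?mulr0 ?addr0 ?andbF ?andbT //.
  by case: c => [|[|c]] //=; rewrite ?addr0 ?add0r.
- rewrite val_ps_tr (val_Rcomp_one (i := j) (ps_comp R i a (Rx1 K))); try lia.
  case/lastP: w => [|w c]; first by rewrite !val_Rcomp_x1_nil.
  rewrite map_rcons (val_Rcomp_x1_rcons a) ?(val_Rcomp_x1_rcons (ps_comp R j a (Rone K 2))); try lia.
  by rewrite (val_Rcomp_one (i := j) a) ?rc_phi2_eq_lt //; lia.
- rewrite val_ps_tr (val_Rcomp_one (i := i) (ps_comp R j a (Rx1 K))); try lia.
  case/lastP: w => [|w c]; first by rewrite !val_Rcomp_x1_nil.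
  rewrite map_rcons (val_Rcomp_x1_rcons a) ?(val_Rcomp_x1_rcons (ps_comp R i a (Rone K 2))); try lia.
  by rewrite (val_Rcomp_one (i := i) a) ?rc_phi2_eq_gt //; lia.
Qed.

Lemma val_R_mun n w : val (ps_mun R (Rone K 2) n : Rcar K n.+1) w = (w == [::])%:R.
Proof.
elim: n w => [|n IH] w //.
by rewrite -(IH w); exact: (val_Rcomp_onel (m := 2) (ps_mun R (Rone K 2) n)).
Qed.

Lemma val_R_compD_fold n s : all (fun j => 0 < j <= n.+1)%N s -> forall w,
  val (foldl (fun a j => ps_compD R (Rx1 K) j a) (ps_mun R (Rone K 2) n) s : Rcar K n.+1) w
  = (w == map predn s)%:R.
Proof.
elim/last_ind: s => [_|s j IH]; first by move=> w; rewrite val_R_mun.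
rewrite all_rcons => /andP[hj hs] w; rewrite foldl_rcons /ps_compD val_ps_tr.
case/lastP: w => [|w c]; first by rewrite val_Rcomp_x1_nil map_rcons; case: (map _ _).
rewrite val_Rcomp_x1_rcons // IH // map_rcons eqseq_rcons.
by case: eqP; case: eqP; rewrite ?mulr1 ?mulr0.
Qed.

Lemma val_R_word_elt n u w : all (fun c => c < n.+1)%N u ->
  val (@word_elt K R (Rx1 K) (Rone K 2) n u : Rcar K n.+1) w = (w == u)%:R.
Proof.
move=> hu; have hs : all (fun j => 0 < j <= n.+1)%N (map S u) by rewrite all_map; apply: sub_all hu.
have Eu : map predn (map S u) = u by rewrite -map_comp (@eq_map _ _ _ id) ?map_id.
rewrite -[in RHS]Eu -(val_R_compD_fold hs); congr (val _ w).
by rewrite /word_elt; elim: u {hu hs Eu} (ps_mun _ _ n) => //= c u IH a; rewrite IH.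
Qed.

End NCPolyAlgebra.

Fixpoint words_upto (n N : nat) : seq (seq nat) :=
  if N is N'.+1 then [::] :: [seq c :: w | c <- iota 0 n, w <- words_upto n N'] else [:: [::]].

Lemma mem_words_upto n N w :
  (w \in words_upto n N) = (size w <= N)%N && all (fun j => j < n)%N w.
Proof.
elim: N w => [|N IH] [|c w] //=; rewrite in_cons /=; apply/allpairsP/andP.
  case=> [[c' w'] /= [hc hw [-> ->]]]; move: hw; rewrite IH => /andP[hs ->].
  by move: hc; rewrite mem_iota add0n andbT.
case=> hs /andP[hc ha]; exists (c, w) => /=; split => //.
  by rewrite mem_iota add0n.
by rewrite IH ha andbT -ltnS.
Qed.

Lemma uniq_words_upto n N : uniq (words_upto n N).
Proof.
elim: N => [|N IH] //=; rewrite allpairs_uniq ?iota_uniq ?andbT //.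
  by apply/negP => /allpairsP [[? ?] [_ _ ?]].
by move=> [a b] [a' b'] _ _ /= [-> ->].
Qed.

Lemma big_support_eq (T : eqType) (V : zmodType) (s1 s2 : seq T) (h : T -> V) :
  uniq s1 -> uniq s2 -> (forall w, h w != 0 -> (w \in s1) && (w \in s2)) ->
  \sum_(w <- s1) h w = \sum_(w <- s2) h w.
Proof.
move=> u1 u2 Hs.
have nz (s : seq T) : \sum_(w <- s) h w = \sum_(w <- s | h w != 0) h w.
  by rewrite [RHS]big_mkcond; apply: eq_bigr => w _; case: eqP.
rewrite nz [RHS]nz -big_filter -[RHS]big_filter; apply/perm_big/uniq_perm; try exact: filter_uniq.
move=> w; rewrite !mem_filter; case: (boolP (h w != 0)) => //= hw.
by case/andP: (Hs w hw) => -> ->.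
Qed.

Section NCPolyBasis.
Variable K : fieldType.
Local Notation R := (RAlg K).
Local Notation wordR := (@word_elt K R (Rx1 K) (Rone K 2)).

Definition ncpoly_bound n (p : ncpoly K n) : nat :=
  proj1_sig (constructive_indefinite_description _ (elimT (asboolP _) (valP p))).

Lemma ncpoly_boundP n (p : ncpoly K n) w : val p w != 0 -> w \in words_upto n (ncpoly_bound p).
Proof.
rewrite /ncpoly_bound; case: constructive_indefinite_description => N /= H /H.
by rewrite mem_words_upto.
Qed.

Lemma ncpoly_word_decomp n (p : ncpoly K n.+1) N :
  (forall w, val p w != 0 -> w \in words_upto n.+1 N) ->
  p = \sum_(u <- words_upto n.+1 N) val p u *: (wordR n u : ncpoly K n.+1).
Proof.
move=> Hp; apply: ncpoly_ext => w; rewrite val_ncpoly_sum.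
rewrite (eq_big_seq (fun u => (u == w)%:R * val p u)) => [|u]; last first.
  by rewrite mem_words_upto => /andP[_ hu]; rewrite val_ncpolyZ val_R_word_elt // mulrC eq_sym.
have [hw|hw] := boolP (w \in words_upto n.+1 N).
  rewrite (bigD1_seq w) ?uniq_words_upto //= eqxx mul1r big1 ?addr0 // => u hu.
  by rewrite (negbTE hu) mul0r.
have pw0 : val p w = 0 by apply/eqP; apply: contraR hw => /Hp.
rewrite pw0 big1 // => u _; case: (eqVneq u w) => [->|_]; last by rewrite mul0r.
by rewrite pw0 mulr0.
Qed.

End NCPolyBasis.

Section UniversalMorphism.
Variables (K : fieldType) (P : preShuffle K) (d : ps_car P 1) (mu : ps_car P 2).
Hypotheses (HP : is_preShuffle P) (HR : PerAsDer_rel P d mu).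
Local Notation R := (RAlg K).
Local Notation wordR := (@word_elt K R (Rx1 K) (Rone K 2)).
Local Notation wordP := (word_elt d mu).

(* The arity 0 carries no structure; it is sent to 0. *)
Definition word_map (k : nat) : ps_car R k -> ps_car P k :=
  match k with
  | 0 => fun _ => 0
  | n.+1 => fun p => \sum_(w <- words_upto n.+1 (ncpoly_bound (p : Rcar K n.+1)))
                       val (p : Rcar K n.+1) w *: wordP n w
  end.

Lemma word_mapE n (p : ps_car R n.+1) N :
  (forall w, val (p : Rcar K n.+1) w != 0 -> w \in words_upto n.+1 N) ->
  word_map p = \sum_(w <- words_upto n.+1 N) val (p : Rcar K n.+1) w *: wordP n w.
Proof.
move=> Hp; apply: big_support_eq; rewrite ?uniq_words_upto // => w hw.
have pw : val (p : Rcar K n.+1) w != 0 by apply: contraNneq hw => ->; rewrite scale0r.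
by rewrite ncpoly_boundP // Hp.
Qed.

Lemma word_map_lin k a (x y : ps_car R k) : word_map (a *: x + y) = a *: word_map x + word_map y.
Proof.
case: k x y => [|n] x y; first by rewrite /= scaler0 addr0.
pose N := maxn (ncpoly_bound (x : Rcar K n.+1))
  (maxn (ncpoly_bound (y : Rcar K n.+1)) (ncpoly_bound (a *: x + y : Rcar K n.+1))).
have HN (q : Rcar K n.+1) : (ncpoly_bound q <= N)%N ->
    forall w, val q w != 0 -> w \in words_upto n.+1 N.
  move=> hq w /ncpoly_boundP; rewrite !mem_words_upto => /andP[hs ->]; rewrite andbT.
  exact: leq_trans hq.
rewrite !(word_mapE (N := N)); try by apply: HN; rewrite /N; lia.
rewrite scaler_sumr -big_split; apply: eq_bigr => w _.
by rewrite val_ncpolyD val_ncpolyZ scalerDl scalerA.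
Qed.

Lemma word_map_word_elt n u : all (fun c => c < n.+1)%N u -> word_map (wordR n u) = wordP n u.
Proof.
move=> hu; rewrite (word_mapE (N := size u)); last first.
  move=> w; rewrite val_R_word_elt //; case: (eqVneq w u) => [->|_]; last by rewrite eqxx.
  by rewrite mem_words_upto leqnn hu.
rewrite (bigD1_seq u) ?uniq_words_upto ?mem_words_upto ?leqnn ?hu //=.
rewrite val_R_word_elt // eqxx scale1r big1 ?addr0 // => w hw.
by rewrite val_R_word_elt // (negbTE hw) scale0r.
Qed.

Lemma word_map_comp_word_elt m n i u v :
  all (fun c => c < m.+1)%N u -> all (fun c => c < n.+1)%N v -> (1 <= i <= m.+1)%N ->
  word_map (ps_comp R i (wordR m u) (wordR n v)) = ps_comp P i (wordP m u) (wordP n v).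
Proof.
move=> hu hv hi; apply: ps_pack_inj.
rewrite (ps_pack_map word_map (word_elt_comp (R_is_preShuffle K) (R_PerAsDer_rel K) hu hv hi)).
rewrite (lin_fun_sum (@word_map_lin _)) (word_elt_comp HP HR hu hv hi).
congr ps_pack; apply: eq_big_seq => u' hu'; apply: word_map_word_elt.
rewrite all_cat (subst_word_letters hu hi hu') all_map.
by apply: sub_all hv => c /=; lia.
Qed.

Lemma word_map_comp m n i (x : ps_car R m) (y : ps_car R n) : (0 < n)%N -> (1 <= i <= m)%N ->
  word_map (ps_comp R i x y) = ps_comp P i (word_map x) (word_map y).
Proof.
case: m x => [|m] x; first by lia.
case: n y => [|n] y hn hi; first by lia.
rewrite (ncpoly_word_decomp (@ncpoly_boundP K m.+1 x)).
rewrite (ncpoly_word_decomp (@ncpoly_boundP K n.+1 y)).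
rewrite (ps_comp_lsum2 (R_is_preShuffle K)) // !(lin_fun_lsum (@word_map_lin _)).
rewrite (ps_comp_lsum2 HP) //; apply: eq_big_seq => u; rewrite mem_words_upto => /andP[_ hu].
congr (_ *: _); rewrite (lin_fun_lsum (@word_map_lin _)).
apply: eq_big_seq => v; rewrite mem_words_upto => /andP[_ hv].
by rewrite word_map_comp_word_elt // !word_map_word_elt.
Qed.

Lemma word_map_is_psmorph : is_psmorph R P word_map.
Proof.
split=> [n a x y|m n i hn hi x y|]; first exact: word_map_lin.
  exact: word_map_comp.
exact: (word_map_word_elt (n := 0) (u := [::])).
Qed.

Lemma word_map_x1 : word_map (Rx1 K) = d.
Proof.
have -> : Rx1 K = wordR 0 [:: 0%N] by apply: ncpoly_ext => w; rewrite val_R_word_elt.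
rewrite word_map_word_elt //; apply: ps_pack_inj.
by rewrite -[[:: 0%N]]/(rcons [::] 0%N) word_elt_rcons ps_pack_compD ps_pack_id_comp.
Qed.

Lemma word_map_mu : word_map (Rone K 2) = mu.
Proof.
have -> : Rone K 2 = wordR 1 [::] by apply: ncpoly_ext => w; rewrite val_R_word_elt.
by rewrite word_map_word_elt //; apply: ps_pack_inj; rewrite /= (ps_pack_comp_id HP (n := 2)).
Qed.

Lemma psmorph_word_elt (g : forall n, ps_car R n -> ps_car P n) : is_psmorph R P g ->
    g 1%N (Rx1 K) = d -> g 2%N (Rone K 2) = mu ->
  forall n u, all (fun c => c < n.+1)%N u -> g n.+1 (wordR n u) = wordP n u.
Proof.
case=> _ Hcomp Hid gd gmu n u; elim/last_ind: u => [_|u c IH].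
  elim: n => [|n IHn] //=.
  by rewrite (Hcomp 2%N n.+1 1%N) // gmu IHn.
rewrite all_rcons => /andP[hc hu]; apply: ps_pack_inj.
rewrite !word_elt_rcons (ps_pack_map g (ps_pack_compD _ _ _)) ps_pack_compD.
by rewrite Hcomp // gd IH.
Qed.

Lemma psmorph_unique (g : forall n, ps_car R n -> ps_car P n) : is_psmorph R P g ->
    g 1%N (Rx1 K) = d -> g 2%N (Rone K 2) = mu ->
  forall n (x : ps_car R n.+1), g n.+1 x = word_map x.
Proof.
move=> Hg gd gmu n x; rewrite (ncpoly_word_decomp (@ncpoly_boundP K n.+1 x)).
case: (Hg) => Hlin _ _; rewrite (lin_fun_lsum (Hlin n.+1)) (lin_fun_lsum (@word_map_lin _)).
apply: eq_big_seq => u; rewrite mem_words_upto => /andP[_ hu].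
by rewrite (psmorph_word_elt Hg gd gmu hu) word_map_word_elt.
Qed.

End UniversalMorphism.

Theorem theorem6p2 (K : fieldType) :
  is_preShuffle (RAlg K) /\
  PerAsDer_rel (RAlg K) (Rx1 K) (Rone K 2) /\
  (forall (P : preShuffle K), is_preShuffle P ->
     forall (d : ps_car P 1) (mu : ps_car P 2), PerAsDer_rel P d mu ->
       exists f : forall n, ps_car (RAlg K) n -> ps_car P n,
         [/\ is_psmorph (RAlg K) P f, f 1%N (Rx1 K) = d, f 2%N (Rone K 2) = mu
           & forall g : forall n, ps_car (RAlg K) n -> ps_car P n,
               is_psmorph (RAlg K) P g -> g 1%N (Rx1 K) = d -> g 2%N (Rone K 2) = mu ->
               forall (n : nat) (x : ps_car (RAlg K) n.+1), g n.+1 x = f n.+1 x]) /\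
  (* s = [:: j_k; ...; j_1] lists the positions in order of application *)
  (forall (n : nat) (s : seq nat), all (fun j => 0 < j <= n.+1)%N s ->
     forall w : seq nat,
       val (foldl (fun a j => ps_compD (RAlg K) (Rx1 K) j a) (ps_mun (RAlg K) (Rone K 2) n) s) w
       = (w == map predn s)%:R).
Proof.
split; first exact: R_is_preShuffle.
split; first exact: R_PerAsDer_rel.
split; last exact: val_R_compD_fold.
move=> P HP d mu HR; exists (word_map d mu); split.
- exact: word_map_is_psmorph.
- exact: word_map_x1.
- exact: word_map_mu.
- exact: psmorph_unique.
Qed.
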